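(* Let $A$ be an $n\times n$ real matrix with $\operatorname{sign}\det A=(-1)^n$, and assume $A$ has a Hurwitz-stable $(n-1)\times(n-1)$ principal submatrix. Then there exists a positive diagonal matrix $D$ such that $AD$ is Hurwitz-stable.
   Context: A square matrix is Hurwitz-stable if all its eigenvalues have negative real part. *)

From HB Require Import structures.
From mathcomp Require Import all_boot all_order all_algebra.
From mathcomp Require Import complex.
From mathcomp Require Import reals.
Set Implicit Arguments. Unset Strict Implicit. Unset Printing Implicit Defensive.
Import Order.TTheory GRing.Theory Num.Theory.
Local Open Scope ring_scope.
Local Open Scope complex_scope.

Definition hurwitz_stable (R : realType) (n : nat) (A : 'M[R]_n) : Prop :=
  forall z : R[i], eigenvalue (map_mx (fun x : R => x%:C) A) z -> complex.Re z < 0.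

From HB Require Import structures.
From mathcomp Require Import all_boot all_order all_algebra.
From mathcomp Require Import complex polyrcf.
From mathcomp Require Import reals.
From mathcomp Require Import ring lra.
Set Implicit Arguments. Unset Strict Implicit. Unset Printing Implicit Defensive.
Import Order.TTheory GRing.Theory Num.Theory Normc.
Local Open Scope ring_scope.
Local Open Scope complex_scope.

(* Scaling the i-th column of A by e > 0 gives, by expansion along that column,
   char_poly (A D) = (1 - e) X p + e q, where p is the characteristic polynomial of
   the stable principal submatrix and q that of A.  The sign condition on det A says
   q(0) = det (-A) > 0, and p(0) > 0 because p has no roots on [0, +oo).  On the closed
   right half-plane |p(z)| >= k (1 + |z|)^(n-1) while |q(z)| <= C (1 + |z|)^n, so a root
   z of the perturbed polynomial with Re z >= 0 must be O(e); but near 0 the equation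
   reads (1 - e) p(0) z = - e q(0) + O(e^2), which forces Re z < 0 for small e. *)

Definition ones_but (F : nzRingType) n (i : 'I_n) (e : F) : 'rV[F]_n :=
  \row_j (if j == i then e else 1).

Lemma det_scalar_sub_mul_ones_but (F : comNzRingType) n (A : 'M[F]_n.+1) i e z :
  \det (z%:M - A *m diag_mx (ones_but i e)) =
  (1 - e) * (z * \det (row' i (col' i (z%:M - A)))) + e * \det (z%:M - A).
Proof.
have lift_neq k : (lift i k == i) = false by apply/negbTE; rewrite eq_sym neq_lift.
rewrite -det_tr (@determinant_multilinear _ _ _
  (z%:M - A *m diag_mx (ones_but i 0))^T (z%:M - A)^T i (1 - e) e); last first.
- by apply/matrixP => k l; rewrite !mul_mx_diag !mxE lift_neq mulr1.
- by apply/matrixP => k l; rewrite !mul_mx_diag !mxE lift_neq.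
- by apply/rowP => l; rewrite !mul_mx_diag !mxE !eqxx; ring.
rewrite !det_tr; congr (_ * _ + _).
rewrite (expand_det_col _ i) (bigD1 i) //= big1 ?addr0; last first.
  by move=> k ki; rewrite !mul_mx_diag !mxE eqxx (negPf ki) mulr0n; ring.
rewrite !mul_mx_diag !mxE !eqxx /cofactor -signr_odd addnn odd_double expr0.
rewrite mul1r mulr0 subr0 mulr1n; congr (_ * \det _).
by apply/matrixP => k l; rewrite !mxE lift_neq (inj_eq lift_inj); ring.
Qed.

Lemma char_poly_mul_ones_but (F : comNzRingType) n (A : 'M[F]_n.+1) i e :
  char_poly (A *m diag_mx (ones_but i e)) =
  (1 - e) *: ('X * char_poly (row' i (col' i A))) + e *: char_poly A.
Proof.
rewrite /char_poly /char_poly_mx map_mxM map_diag_mx.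
have -> : map_mx polyC (ones_but i e) = ones_but i e%:P.
  by apply/rowP => j; rewrite !mxE; case: ifP.
rewrite det_scalar_sub_mul_ones_but -/(char_poly_mx A) row'_col'_char_poly_mx.
by rewrite -!mul_polyC rmorphB rmorph1.
Qed.

Section ComplexModulus.
Variable R : rcfType.
Implicit Types (x : R) (z w : R[i]).

Lemma normcE z : `|z| = (normc z)%:C.
Proof. by case: z => a b; rewrite normc_def. Qed.

Lemma normc_ge0 z : 0 <= normc z.
Proof. by rewrite -lecR -normcE normr_ge0. Qed.

Lemma normcX z k : normc (z ^+ k) = normc z ^+ k.
Proof. by elim: k => [|k IH]; rewrite ?expr0 ?normc1 // !exprS normcM IH. Qed.

Lemma normc_real x : normc x%:C = `|x|.
Proof. by rewrite /= expr0n /= addr0 sqrtr_sqr. Qed.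

Lemma Re_le_normc z : complex.Re z <= normc z.
Proof.
rewrite -lecR -normcE; apply: le_trans (normc_ge_Re z).
by rewrite lecR real_ler_norm ?num_real.
Qed.

Lemma normc_sum m (F : 'I_m -> R[i]) : normc (\sum_(j < m) F j) <= \sum_(j < m) normc (F j).
Proof.
elim/big_ind2: _ => [|z1 x1 z2 x2 h1 h2|]; rewrite ?normc0 //.
by apply: le_trans (le_normcD _ _) _; apply: lerD.
Qed.
End ComplexModulus.

Section PolynomialBounds.
Variable R : rcfType.
Implicit Types (p : {poly R[i]}) (z w : R[i]).

Definition coef_normc1 p : R := \sum_(j < size p) normc p`_j.

Lemma coef_normc1_ge0 p : 0 <= coef_normc1 p.
Proof. by apply: sumr_ge0 => j _; apply: normc_ge0. Qed.

Lemma normc_horner_le p z k : ((size p).-1 <= k)%N ->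
  normc p.[z] <= coef_normc1 p * (1 + normc z) ^+ k.
Proof.
move=> sz_p; rewrite horner_coef /coef_normc1 mulr_suml.
apply: le_trans (normc_sum _) _; apply: ler_sum => j _.
rewrite normcM normcX; apply: ler_wpM2l; first exact: normc_ge0.
have z_ge0 := normc_ge0 z.
apply: (@le_trans _ _ ((1 + normc z) ^+ j)).
  by apply: lerXn2r; rewrite ?nnegrE ?addr_ge0 // lerDr.
apply: ler_weXn2l; first by rewrite lerDl.
by apply: leq_trans sz_p; rewrite -ltnS prednK // (leq_ltn_trans _ (ltn_ord j)).
Qed.

Lemma normc_horner_sub0_le p z : normc z <= 1 ->
  normc (p.[z] - p.[0]) <= coef_normc1 p * normc z.
Proof.
move=> z_le1; rewrite !horner_coef -sumrB /coef_normc1 mulr_suml.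
apply: le_trans (normc_sum _) _; apply: ler_sum => j _.
rewrite -mulrBr normcM; apply: ler_wpM2l; first exact: normc_ge0.
case: j => [[|j] lt_j]; first by rewrite !expr0 subrr normc0 normc_ge0.
rewrite expr0n /= subr0 normcX exprS.
by apply: ler_piMr; [exact: normc_ge0 | apply: exprn_ile1; rewrite ?normc_ge0].
Qed.

Lemma normc_sub_ge_left_half w z : complex.Re w < 0 -> 0 <= complex.Re z ->
  (- complex.Re w) / (1 + normc w - complex.Re w) * (1 + normc z) <= normc (z - w).
Proof.
move=> w_lt0 z_ge0.
have Re_le : complex.Re z - complex.Re w <= normc (z - w).
  by rewrite -raddfB; apply: Re_le_normc.
have z_le : normc z <= normc (z - w) + normc w by rewrite -{1}(subrK w z); apply: le_normcD.
have := normc_ge0 w; have := normc_ge0 (z - w) => ? ?.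
rewrite mulrAC ler_pdivrMr; last by lra.
nra.
Qed.

Lemma normc_prod_XsubC_ge (r : seq R[i]) : (forall w, w \in r -> complex.Re w < 0) ->
  exists2 k, 0 < k & forall z, 0 <= complex.Re z ->
    k * (1 + normc z) ^+ size r <= normc (\prod_(w <- r) (z - w)).
Proof.
elim: r => [|w r IHr] r_lt0.
  by exists 1 => // z _; rewrite big_nil expr0 mulr1 normc1.
have [k k_gt0 k_le] := IHr (fun x xr => r_lt0 x (mem_behead (s := w :: r) xr)).
have w_lt0 : complex.Re w < 0 by apply: r_lt0; rewrite mem_head.
have w_ge0 := normc_ge0 w.
exists ((- complex.Re w) / (1 + normc w - complex.Re w) * k).
  by apply: mulr_gt0 => //; apply: divr_gt0; lra.
move=> z z_ge0; have := normc_ge0 z => nz_ge0.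
rewrite big_cons normcM /= exprS mulrACA; apply: ler_pM.
- by apply: mulr_ge0; [apply: divr_ge0|]; lra.
- by apply: mulr_ge0; [lra | apply: exprn_ge0; lra].
- exact: normc_sub_ge_left_half.
- exact: k_le.
Qed.

Lemma normc_horner_ge p : p \is monic -> (forall w, root p w -> complex.Re w < 0) ->
  exists2 k, 0 < k & forall z, 0 <= complex.Re z ->
    k * (1 + normc z) ^+ (size p).-1 <= normc p.[z].
Proof.
move=> p_monic p_lt0; have [r def_p] := closed_field_poly_normal p.
rewrite (monicP p_monic) scale1r in def_p.
have r_lt0 w : w \in r -> complex.Re w < 0.
  by move=> wr; apply: p_lt0; rewrite def_p root_prod_XsubC.
have [k k_gt0 k_le] := normc_prod_XsubC_ge r_lt0.
exists k => // z z_ge0; rewrite def_p size_prod_XsubC horner_prod.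
under eq_bigr => w _ do rewrite hornerXsubC.
exact: k_le.
Qed.
End PolynomialBounds.

Lemma monic_horner0_gt0 (R : rcfType) (p : {poly R}) : p \is monic ->
  (forall x, 0 <= x -> ~~ root p x) -> 0 < p.[0].
Proof.
move=> p_monic p_no_root; rewrite ltNge; apply/negP => p0_le0.
have lc_gt0 : 0 < lead_coef p by rewrite (monicP p_monic) ltr01.
have [N N_le] := poly_pinfty_gt_lc lc_gt0.
have pN_ge1 := N_le `|N| (ler_norm N); rewrite (monicP p_monic) in pN_ge1.
have sign_change := mulr_le0_ge0 p0_le0 (le_trans ler01 pN_ge1).
have [x] := polyrcf.poly_ivt (normr_ge0 N) sign_change.
rewrite in_itv /= => /andP[x_ge0 _] /eqP px.
by move: (p_no_root x x_ge0); rewrite /root px eqxx.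
Qed.

Section StablePerturbation.
Variables (R : rcfType) (p q : {poly R}).
Let P := map_poly (real_complex R) p.
Let Q := map_poly (real_complex R) q.
Hypotheses (p0_gt0 : 0 < p.[0]) (q0_gt0 : 0 < q.[0]) (size_q : (size q <= (size p).+1)%N).
Variable k : R.
Hypotheses (k_gt0 : 0 < k) (P_ge : forall z, 0 <= complex.Re z ->
  k * (1 + normc z) ^+ (size p).-1 <= normc P.[z]).

(* A root z with Re z >= 0 satisfies |z| <= e c (perturbed_root_small); W is then chosen
   so that the quadratic error terms of the linearization at 0 stay below e q(0). *)
Let sP := coef_normc1 P.
Let sQ := coef_normc1 Q.
Let c := 4 * sQ / k.
Let W := (sP * c ^+ 2 + sQ * c) / q.[0].

Let c_ge0 : 0 <= c.
Proof. by apply: divr_ge0; [apply: mulr_ge0 => //; apply: coef_normc1_ge0 | apply: ltW]. Qed.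

Let W_ge0 : 0 <= W.
Proof.
have := coef_normc1_ge0 P; have := coef_normc1_ge0 Q => ? ?.
by apply: divr_ge0; [apply: addr_ge0; apply: mulr_ge0; rewrite ?exprn_ge0 | apply: ltW].
Qed.

Lemma perturbed_root_small e z : 0 < e -> e * (2 + c) <= 1 -> 0 <= complex.Re z ->
  (1 - e)%:C * (z * P.[z]) + e%:C * Q.[z] = 0 -> normc z <= e * c.
Proof.
move=> e_gt0 e_le Re_ge0 root_z; set x := normc z.
have x_ge0 : 0 <= x := normc_ge0 z.
have sQ_ge0 := coef_normc1_ge0 Q.
have e_le_half : 2 * e <= 1 by have := c_ge0; nra.
have norm_eq : (1 - e) * (x * normc P.[z]) = e * normc Q.[z].
  have /(congr1 (@normc R)) : (1 - e)%:C * (z * P.[z]) = - (e%:C * Q.[z]).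
    by apply/eqP; rewrite -subr_eq0 opprK root_z.
  by rewrite normcN !normcM !normc_real !ger0_norm //; lra.
have p_neq0 : p != 0 by apply: contraTneq p0_gt0 => ->; rewrite horner0 ltxx.
have size_p : size p = (size p).-1.+1 by rewrite prednK // size_poly_gt0.
have Q_le : normc Q.[z] <= sQ * (1 + x) ^+ (size p).-1.+1.
  by apply: normc_horner_le; rewrite size_map_poly -size_p -subn1 leq_subLR add1n.
have y_gt0 : 0 < (1 + x) ^+ (size p).-1 by rewrite exprn_gt0 //; lra.
have small : (1 - e) * x * k <= e * sQ * (1 + x).
  rewrite -(ler_pM2r y_gt0); apply: le_trans (_ : (1 - e) * (x * normc P.[z]) <= _).
    rewrite -!mulrA; apply: ler_wpM2l; first lra.
    by apply: ler_wpM2l => //; apply: P_ge.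
  rewrite norm_eq -!mulrA; apply: ler_wpM2l; first lra.
  by rewrite -exprS.
have ck : c * k = 4 * sQ by rewrite /c mulrVK // unitfE gt_eqF.
have eQ_le : 4 * (e * sQ) <= (1 - 2 * e) * k.
  by rewrite mulrCA -ck mulrA; apply: ler_wpM2r; [exact: ltW | lra].
have eQx_le : 4 * (e * sQ) * x <= (1 - 2 * e) * k * x by apply: ler_wpM2r.
have exk_le : e * (x * k) <= x * k by apply: ler_piMl; [rewrite mulr_ge0 // ltW | lra].
rewrite -(ler_pM2r k_gt0) -mulrA ck; nra.
Qed.

Lemma perturbed_root_Re_le e z : 0 <= e <= 1 -> normc z <= 1 ->
  (1 - e)%:C * (z * P.[z]) + e%:C * Q.[z] = 0 ->
  (1 - e) * p.[0] * complex.Re z <= sP * normc z ^+ 2 + e * (sQ * normc z) - e * q.[0].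
Proof.
move=> /andP[e_ge0 e_le1] x_le1 root_z; set x := normc z in x_le1 *.
have x_ge0 : 0 <= x := normc_ge0 z.
have horner0 r : (map_poly (real_complex R) r).[0] = r.[0]%:C.
  by rewrite -(rmorph0 (real_complex R)) horner_map.
set u := (1 - e)%:C * z * (P.[z] - P.[0]).
set v := e%:C * (Q.[z] - Q.[0]).
have linearized : (1 - e)%:C * (P.[0] * z) = - (u + v) - e%:C * Q.[0].
  by apply/eqP; rewrite -subr_eq0; apply/eqP; rewrite -[RHS]root_z /u /v; ring.
have Re_scale (a : R) (w : R[i]) : complex.Re (a%:C * w) = a * complex.Re w.
  by case: w => ? ? /=; rewrite mul0r subr0.
have := congr1 (@complex.Re R) linearized.
rewrite !horner0 !Re_scale raddfB /= mulr0 subr0 mulrA => ->.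
rewrite lerD2r; apply: le_trans (Re_le_normc _) _; rewrite normcN.
apply: le_trans (le_normcD _ _) _; apply: lerD.
  rewrite !normcM normc_real ger0_norm ?subr_ge0 // -/x -mulrA expr2.
  apply: le_trans (_ : x * normc (P.[z] - P.[0]) <= _).
    by apply: ler_piMl; [rewrite mulr_ge0 ?normc_ge0 | lra].
  by rewrite [leRHS]mulrCA; apply/ler_wpM2l/normc_horner_sub0_le.
rewrite normcM normc_real ger0_norm //.
by apply/ler_wpM2l/normc_horner_sub0_le.
Qed.

Lemma perturbed_root_Re_lt0 e z : 0 < e -> e * (2 + c + W) <= 1 ->
  (1 - e)%:C * (z * P.[z]) + e%:C * Q.[z] = 0 -> complex.Re z < 0.
Proof.
move=> e_gt0 e_le root_z; rewrite ltNge; apply/negP => Re_ge0.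
have sP_ge0 : 0 <= sP := coef_normc1_ge0 P.
have sQ_ge0 : 0 <= sQ := coef_normc1_ge0 Q.
have ec_ge0 := mulr_ge0 (ltW e_gt0) c_ge0.
have eW_ge0 := mulr_ge0 (ltW e_gt0) W_ge0.
have x_le : normc z <= e * c by apply: perturbed_root_small => //; lra.
have x_ge0 := normc_ge0 z.
have e_le1 : 0 <= e <= 1 by rewrite ltW //=; lra.
have x_le1 : normc z <= 1 by lra.
have Re_le := perturbed_root_Re_le e_le1 x_le1 root_z.
have lhs_ge0 : 0 <= (1 - e) * p.[0] * complex.Re z.
  by rewrite !mulr_ge0 ?subr_ge0 // ?ltW //; lra.
have Wq : W * q.[0] = sP * c ^+ 2 + sQ * c by rewrite /W mulrVK // unitfE gt_eqF.
have err_le : sP * normc z ^+ 2 + e * (sQ * normc z) <= e * (e * (W * q.[0])).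
  have xx_le : normc z ^+ 2 <= (e * c) ^+ 2 by rewrite lerXn2r ?nnegrE.
  have := ler_wpM2l sP_ge0 xx_le; have := ler_wpM2l (ltW e_gt0) (ler_wpM2l sQ_ge0 x_le).
  by rewrite Wq; lra.
have : e * q.[0] <= e * (e * (W * q.[0])) by lra.
by rewrite (ler_pM2l e_gt0) mulrA ler_pMl //; lra.
Qed.

Lemma perturbation_roots_Re_lt0 : exists2 e, 0 < e & forall z,
  (1 - e)%:C * (z * P.[z]) + e%:C * Q.[z] = 0 -> complex.Re z < 0.
Proof.
have T_gt0 : 0 < 2 + c + W by have := c_ge0; have := W_ge0; lra.
exists (2 + c + W)^-1; first by rewrite invr_gt0.
by move=> z; apply: perturbed_root_Re_lt0; rewrite ?invr_gt0 // mulVf ?gt_eqF.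
Qed.
End StablePerturbation.

Lemma stable_perturbation (R : rcfType) (p q : {poly R}) : p \is monic ->
  (forall w, root (map_poly (real_complex R) p) w -> complex.Re w < 0) ->
  0 < q.[0] -> (size q <= (size p).+1)%N ->
  exists2 e, 0 < e & forall z,
    root (map_poly (real_complex R) ((1 - e) *: ('X * p) + e *: q)) z -> complex.Re z < 0.
Proof.
move=> p_monic p_stable q0_gt0 size_q.
have p0_gt0 : 0 < p.[0].
  apply: monic_horner0_gt0 => // x x_ge0; apply/negP => /eqP px.
  have : complex.Re x%:C < 0 by apply: p_stable; rewrite /root horner_map px rmorph0.
  by rewrite /= ltNge x_ge0.
have P_monic : map_poly (real_complex R) p \is monic by rewrite map_monic.
have [k k_gt0] := normc_horner_ge P_monic p_stable.
rewrite size_map_poly => P_ge.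
have [e e_gt0 e_stable] := perturbation_roots_Re_lt0 p0_gt0 q0_gt0 size_q k_gt0 P_ge.
exists e => // z; rewrite -!mul_polyC rmorphD !rmorphM /= map_polyX !map_polyC.
by rewrite /root !hornerE /= -mulrA => /eqP; apply: e_stable.
Qed.

Theorem mainTheorem7 (R : realType) (n : nat) (A : 'M[R]_n.+1) :
  Num.sg (\det A) = (-1) ^+ n.+1 ->
  (exists i : 'I_n.+1, hurwitz_stable (row' i (col' i A))) ->
  exists d : 'rV[R]_n.+1,
    (forall j, 0 < d 0 j) /\ hurwitz_stable (A *m diag_mx d).
Proof.
move=> sg_det [i B_stable]; set B := row' i (col' i A).
have det_neq0 : \det A != 0.
  by apply: contra_eq_neq sg_det => ->; rewrite sgr0 eq_sym signr_eq0.
have q0_gt0 : 0 < (char_poly A).[0].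
  by rewrite horner_coef0 char_poly_det -sg_det -normrEsg normr_gt0.
have B_roots w : root (map_poly (real_complex R) (char_poly B)) w -> complex.Re w < 0.
  by rewrite map_char_poly -eigenvalue_root_char; apply: B_stable.
have size_q : (size (char_poly A) <= (size (char_poly B)).+1)%N.
  by rewrite !size_char_poly.
have [e e_gt0 e_stable] := stable_perturbation (char_poly_monic B) B_roots q0_gt0 size_q.
exists (ones_but i e); split; first by move=> j; rewrite mxE; case: ifP.
move=> z; rewrite eigenvalue_root_char -map_char_poly char_poly_mul_ones_but.
exact: e_stable.
Qed.
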